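(* Let $\mathcal{H}_1,\mathcal{H}_2$ be hyperplanes in a partial linear space with $\mathcal{H}_1\subseteq\mathcal{H}_2$. If $\mathcal{H}_2$ is spiky, then $\mathcal{H}_1=\mathcal{H}_2$.
   Context: A partial linear space is a pair $(S,\mathcal{L})$ where $\mathcal{L}$ is a family of subsets of $S$ (lines) such that every line has at least two points, every point lies on some line, and two distinct lines share at most one point. Points are collinear if some line contains both. A subspace is a set $X\subseteq S$ such that every line meeting $X$ in at least two points is contained in $X$; a hyperplane is a proper subspace meeting every line. A set $X$ is spiky if every point of $X$ is collinear with some point not in $X$. *)

Definition pset (S : Type) := S -> Prop.

Definition set_eq {S : Type} (A B : pset S) : Prop := forall x, A x <-> B x.
Definition subset {S : Type} (A B : pset S) : Prop := forall x, A x -> B x.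

Definition partial_linear_space (S : Type) (L : pset S -> Prop) : Prop :=
  (forall l, L l -> exists x y, x <> y /\ l x /\ l y) /\
  (forall p : S, exists l, L l /\ l p) /\
  (forall l m, L l -> L m -> ~ set_eq l m ->
     forall x y, l x -> l y -> m x -> m y -> x = y).

Definition collinear {S : Type} (L : pset S -> Prop) (x y : S) : Prop :=
  exists l, L l /\ l x /\ l y.

Definition subspace {S : Type} (L : pset S -> Prop) (X : pset S) : Prop :=
  forall l, L l -> (exists x y, x <> y /\ l x /\ l y /\ X x /\ X y) ->
    subset l X.

Definition hyperplane {S : Type} (L : pset S -> Prop) (X : pset S) : Prop :=
  subspace L X /\ (exists p, ~ X p) /\
  (forall l, L l -> exists p, l p /\ X p).

Definition spiky {S : Type} (L : pset S -> Prop) (X : pset S) : Prop :=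
  forall x, X x -> exists y, ~ X y /\ collinear L x y.

From Stdlib Require Import Classical.

(* A point x of H2 \ H1 lies on a line l through a point outside H2 (spikiness);
   l meets H1 in some point w, which differs from x, so l has two points in the
   subspace H2 and is contained in it, contradicting the point outside. *)

Lemma subspace_line_subset {S : Type} {L : pset S -> Prop} {X : pset S} {l x w} :
  subspace L X -> L l -> l x -> l w -> x <> w -> X x -> X w -> subset l X.
Proof.
  intros HX Hl lx lw Hxw Xx Xw.
  apply (HX l Hl); exists x, w; auto.
Qed.

Lemma hyperplane_meets_line_off_point {S : Type} {L : pset S -> Prop} {H : pset S} {l x} :
  hyperplane L H -> L l -> ~ H x -> exists w, l w /\ H w /\ x <> w.
Proof.
  intros [_ [_ Hmeet]] Hl Hx.
  destruct (Hmeet l Hl) as [w [lw Hw]].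
  exists w; split; [exact lw | split; [exact Hw |]].
  intros ->; contradiction.
Qed.

Theorem lemma1p4 (S : Type) (L : pset S -> Prop) (H1 H2 : pset S) :
  partial_linear_space S L ->
  hyperplane L H1 -> hyperplane L H2 ->
  subset H1 H2 -> spiky L H2 ->
  set_eq H1 H2.
Proof.
  intros _ Hyp1 [Hsub2 _] H12 Hspiky x; split; [apply H12 |].
  intros H2x; apply NNPP; intros H1x.
  destruct (Hspiky x H2x) as [y [H2y [l [Hl [lx ly]]]]].
  destruct (hyperplane_meets_line_off_point Hyp1 Hl H1x) as [w [lw [H1w Hxw]]].
  apply H2y, (subspace_line_subset Hsub2 Hl lx lw Hxw H2x (H12 w H1w) y ly).
Qed.
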